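(* Over profiles whose ballots are strict weak orders (ties allowed), let $F$ be a VSCC satisfying Downward Homogeneity, Coherent Defeat, and Tolerant Positive Involvement. Then $F(\mathbf P)\subseteq SC(\mathbf P)$ for every profile $\mathbf P$.
   Context: Profiles: $\mathbf P:V\to\mathcal W(X)$, $V$ nonempty finite set of voters, $X=X(\mathbf P)$ nonempty finite set of candidates (from fixed infinite sets), $\mathcal W(X)$ the strict weak orders on $X$ (ties allowed). ''Ranks $x$ above $y$'' means strictly. $\mathrm{Margin}_{\mathbf P}(x,y)$ = #voters with $x$ strictly above $y$ minus #voters with $y$ strictly above $x$; $x$ majority preferred to $y$ if $>0$. Majority path: sequence with positive consecutive margins; strength = minimum of these. $(x,y)\in sc(\mathbf P)$ iff $\mathrm{Margin}_{\mathbf P}(x,y)>0$ exceeds the strength of every majority path from $y$ to $x$; $SC(\mathbf P)$ = set of $y$ with no $x$ such that $(x,y)\in sc(\mathbf P)$. A VSCC is $F$ with $\varnothing\ne F(\mathbf P)\subseteq X(\mathbf P)$. Downward Homogeneity: $F(\mathbf P)\subseteq F(2\mathbf P)$ ($2\mathbf P$ duplicates each voter). Coherent Defeat: $\mathrm{Margin}_{\mathbf P}(x,y)>0$ and no majority path from $y$ to $x$ imply $y\notin F(\mathbf P)$. Tolerant Positive Involvement: if $x\in F(\mathbf P)$ and $\mathbf P'$ adds one new voter who ranks $x$ strictly above every other candidate $y$ to which $x$ is not majority preferred in $\mathbf P$, then $x\in F(\mathbf P')$. *)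

From HB Require Import structures.
From mathcomp Require Import all_boot all_order all_algebra.
From mathcomp Require Import finmap.
Set Implicit Arguments. Unset Strict Implicit. Unset Printing Implicit Defensive.
Import Order.TTheory GRing.Theory Num.Theory.
Local Open Scope fset_scope.

Definition strict_weak_order (X : {fset nat}) (R : nat -> nat -> bool) : Prop :=
  [/\ (forall x, x \in X -> ~~ R x x),
      (forall x y z, x \in X -> y \in X -> z \in X -> R x y -> R y z -> R x z)
    & (forall x y z, x \in X -> y \in X -> z \in X -> R x z -> R x y || R y z)].

(* A profile: nonempty finite voter set, nonempty finite candidate set, and for
   each voter a strict weak order on the candidates.  [ballot i x y] means
   voter i ranks x strictly above y; it is false outside voters/candidates, so a
   profile is determined by its voters, candidates and ballots. *)
Record profile := Profile {
  voters : {fset nat};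
  cands : {fset nat};
  ballot : nat -> nat -> nat -> bool;
  voters_ne : voters != fset0;
  cands_ne : cands != fset0;
  ballot_dom : forall i x y, ballot i x y -> [/\ i \in voters, x \in cands & y \in cands];
  ballot_swo : forall i, i \in voters -> strict_weak_order cands (ballot i)
}.

Definition margin (P : profile) (x y : nat) : int :=
  (#|` [fset i in voters P | ballot P i x y]|%:Z
   - #|` [fset i in voters P | ballot P i y x]|%:Z)%R.

Definition majority_path (P : profile) (a : nat) (s : seq nat) (b : nat) : Prop :=
  path (fun u v => (0 < margin P u v)%R) a s /\ last a s = b.

Definition path_strength (P : profile) (a : nat) (s : seq nat) : int :=
  let ms := pairmap (margin P) a s in foldr Order.min (head 0%R ms) ms.

Definition sc (P : profile) (x y : nat) : Prop :=
  (0 < margin P x y)%R /\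
  forall s, majority_path P y s x -> (path_strength P y s < margin P x y)%R.

Definition in_SC (P : profile) (y : nat) : Prop :=
  y \in cands P /\ forall x, ~ sc P x y.

Definition VSCC (F : profile -> {fset nat}) : Prop :=
  forall P, F P != fset0 /\ F P `<=` cands P.

(* Q is 2P: voter i of P is duplicated into voters 2i and 2i+1 of Q. *)
Definition is_double (P Q : profile) : Prop :=
  [/\ cands Q = cands P,
      (forall j, (j \in voters Q) = (j./2 \in voters P))
    & (forall j, ballot Q j = ballot P j./2)].

Definition downward_homogeneity (F : profile -> {fset nat}) : Prop :=
  forall P Q, is_double P Q -> F P `<=` F Q.

Definition coherent_defeat (F : profile -> {fset nat}) : Prop :=
  forall P x y, (0 < margin P x y)%R -> (forall s, ~ majority_path P y s x) ->
    y \notin F P.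

Definition tolerant_adds (P P' : profile) (x : nat) : Prop :=
  cands P' = cands P /\
  exists i, [/\ i \notin voters P,
     voters P' = i |` voters P,
     (forall j, j != i -> ballot P' j = ballot P j)
   & (forall y, y \in cands P -> y != x -> ~~ (0 < margin P x y)%R ->
        ballot P' i x y)].

Definition tolerant_positive_involvement (F : profile -> {fset nat}) : Prop :=
  forall P P' x, x \in F P -> tolerant_adds P P' x -> x \in F P'.

From mathcomp Require Import all_boot all_order all_algebra.
From mathcomp Require Import finmap zify boolp.
Set Implicit Arguments. Unset Strict Implicit. Unset Printing Implicit Defensive.
Import Order.TTheory GRing.Theory Num.Theory.
Local Open Scope fset_scope.

(* Suppose y is in F(P) although (x, y) is in sc(P), and let m := Margin(x, y).
   Let C be the set of candidates from which x can be reached along edges of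
   margin at least m: then x is in C, y is not, and every margin from outside C
   into C is below m.  In 2P, where y still wins by Downward Homogeneity, these
   margins are at most 2m - 2 while Margin(x, y) = 2m.  Now add 2m - 2 voters one
   at a time, each ranking first the members of C that y beats, then y, then the
   other members of C, then everybody else.  Such a voter ranks y above every
   candidate y does not beat, so y keeps winning by Tolerant Positive
   Involvement; it lowers by one Margin(x, y) and every margin into C from a
   candidate other than y outside C, while the margins of y into C end up at
   most 1 and, by parity, at most 0.  In the last profile Margin(x, y) = 2 but
   no majority path leads from y into C, so Coherent Defeat excludes y. *)

Lemma marginN P a b : margin P b a = (- margin P a b)%R.
Proof. by rewrite /margin opprB. Qed.

Lemma margin_gt0_cands P a b : (0 < margin P a b)%R -> a \in cands P /\ b \in cands P.
Proof.
rewrite /margin => hm.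
have : (0 < #|` [fset i in voters P | ballot P i a b]|)%N by lia.
by rewrite cardfs_gt0 => /fset0Pn[i]; rewrite !inE => /andP[_ /ballot_dom[]].
Qed.

Lemma path_strength_ge P (m : int) a s : s != [::] ->
  path (fun u v => m <= margin P u v)%R a s -> (m <= path_strength P a s)%R.
Proof.
move=> sne hp.
have ms_ge : all (>= m)%R (pairmap (margin P) a s).
  by elim: s a hp {sne} => //= b s IH a /andP[-> /IH].
have : (m <= head 0%R (pairmap (margin P) a s))%R.
  by case: s sne hp {ms_ge} => //= b s _ /andP[].
rewrite /path_strength; move: (head _ _) => t ht.
by elim: (pairmap _ a s) ms_ge => //= t' l IH /andP[ht' /IH]; rewrite le_min ht'.
Qed.

Lemma majority_path_crosses P (c : pred nat) a s :
  ~~ c a -> c (last a s) -> path (fun u v => 0 < margin P u v)%R a s ->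
  exists u v, [/\ ~~ c u, c v & (0 < margin P u v)%R].
Proof.
elim: s a => [|b s IH] a /= ca; first by rewrite (negbTE ca).
move=> cl /andP[hab hp]; case cb: (c b); first by exists a, b; rewrite cb.
exact: IH (negbT cb) cl hp.
Qed.

Section AddVoter.
Variables (P : profile) (i : nat) (r : nat -> nat -> bool).
Hypothesis r_dom : forall a b, r a b -> a \in cands P /\ b \in cands P.
Hypothesis r_swo : strict_weak_order (cands P) r.

Definition add_ballot j := if j == i then r else ballot P j.

Lemma add_voters_ne : i |` voters P != fset0.
Proof. by apply/fset0Pn; exists i; rewrite fsetU11. Qed.

Lemma add_ballot_dom j a b :
  add_ballot j a b -> [/\ j \in i |` voters P, a \in cands P & b \in cands P].
Proof.
by rewrite /add_ballot !inE; case: eqP => [_ /r_dom[]|_ /ballot_dom[] ->].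
Qed.

Lemma add_ballot_swo j : j \in i |` voters P -> strict_weak_order (cands P) (add_ballot j).
Proof. by rewrite /add_ballot !inE; case: eqP => //= _; apply: ballot_swo. Qed.

Definition add_voter : profile :=
  @Profile (i |` voters P) (cands P) add_ballot add_voters_ne (cands_ne P)
    add_ballot_dom add_ballot_swo.

Hypothesis i_fresh : i \notin voters P.

Lemma card_add_voter_supporters a b :
  #|` [fset j in voters add_voter | ballot add_voter j a b]| =
  (r a b + #|` [fset j in voters P | ballot P j a b]|)%N.
Proof.
rewrite /= /add_ballot; case rab: (r a b).
  have -> : [fset j in i |` voters P | (if j == i then r else ballot P j) a b] =
            i |` [fset j in voters P | ballot P j a b].
    by apply/fsetP=> j; rewrite !inE; case: eqVneq => [->|] //=; rewrite rab.
  by rewrite cardfsU1 !inE (negbTE i_fresh).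
congr #|` _|; apply/fsetP=> j; rewrite !inE.
by case: eqVneq => [->|] //=; rewrite rab (negbTE i_fresh).
Qed.

Lemma margin_add_voter a b :
  margin add_voter a b = (margin P a b + (r a b : nat)%:Z - (r b a : nat)%:Z)%R.
Proof. by rewrite /margin !card_add_voter_supporters; lia. Qed.

Lemma add_voter_tolerant x :
  (forall y, y \in cands P -> y != x -> ~~ (0 < margin P x y)%R -> r x y) ->
  tolerant_adds P add_voter x.
Proof.
move=> hx; split=> //; exists i; split=> //.
- by move=> j /negbTE; rewrite /= /add_ballot => ->.
- by move=> y yc yx hy; rewrite /= /add_ballot eqxx; apply: hx.
Qed.

End AddVoter.

Lemma exists_fresh (A : {fset nat}) : exists i, i \notin A.
Proof.
exists (\max_(j <- A) j).+1; apply/negP => /(@leq_bigmax_seq _ _ xpredT id) /(_ isT).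
by rewrite ltnn.
Qed.

Definition rank_ballot (X : {fset nat}) (f : nat -> nat) a b := [&& a \in X, b \in X & f a < f b].

Lemma rank_ballot_dom X f a b : rank_ballot X f a b -> a \in X /\ b \in X.
Proof. by case/and3P. Qed.

Lemma rank_ballot_swo X f : strict_weak_order X (rank_ballot X f).
Proof.
rewrite /rank_ballot; split=> [a _|a b d ha hb hd|a b d ha hb hd]; rewrite ?ltnn ?andbF //.
- by rewrite ha hb hd; apply: ltn_trans.
- by rewrite ha hb hd /= => hab; case: (ltnP (f a) (f b)) => // /leq_ltn_trans->.
Qed.

Lemma tolerant_rank_voter F P x (f : nat -> nat) :
  tolerant_positive_involvement F -> x \in F P -> x \in cands P ->
  (forall y, y \in cands P -> y != x -> ~~ (0 < margin P x y)%R -> f x < f y) ->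
  exists P', [/\ x \in F P', cands P' = cands P &
    forall a b, a \in cands P -> b \in cands P ->
      margin P' a b = (margin P a b + (f a < f b : nat)%:Z - (f b < f a : nat)%:Z)%R].
Proof.
move=> hT hx xc hf; have [i i_fresh] := exists_fresh (voters P).
exists (@add_voter P i _ (@rank_ballot_dom _ f) (rank_ballot_swo _ f)); split=> //.
- apply: hT hx (add_voter_tolerant _ _ i_fresh _) => y yc yx hy.
  by rewrite /rank_ballot xc yc hf.
- by move=> a b ac bc; rewrite margin_add_voter // /rank_ballot ac bc.
Qed.

Definition dup (A : {fset nat}) : {fset nat} :=
  [fset i.*2 | i in A] `|` [fset i.*2.+1 | i in A].

Lemma in_dup A j : (j \in dup A) = (j./2 \in A).
Proof.
rewrite !inE; apply/orP/idP => [[] /imfsetP[i /= iA ->]|jA].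
- by rewrite doubleK.
- by rewrite -add1n (half_bit_double _ true).
have := odd_double_half j; case: (odd j) => /= <-; [right|left]; apply/imfsetP;
  by exists j./2.
Qed.

Lemma card_dup A : #|` dup A| = (#|` A|).*2.
Proof.
rewrite cardfsU; have -> : [fset i.*2 | i in A] `&` [fset i.*2.+1 | i in A] = fset0.
  apply/fsetP=> j; rewrite !inE; apply/negP=> /andP[/imfsetP[u _ ->] /imfsetP[v _]].
  lia.
by rewrite cardfs0 subn0 !card_imfset -?addnn // => u v; lia.
Qed.

Section Double.
Variable P : profile.

Lemma dup_voters_ne : dup (voters P) != fset0.
Proof.
by case/fset0Pn: (voters_ne P) => i iV; apply/fset0Pn; exists i.*2; rewrite in_dup doubleK.
Qed.

Definition double_ballot j := ballot P j./2.

Lemma double_ballot_dom j a b :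
  double_ballot j a b -> [/\ j \in dup (voters P), a \in cands P & b \in cands P].
Proof. by case/ballot_dom; rewrite in_dup. Qed.

Lemma double_ballot_swo j : j \in dup (voters P) -> strict_weak_order (cands P) (double_ballot j).
Proof. by rewrite in_dup; apply: ballot_swo. Qed.

Definition double_profile : profile :=
  @Profile (dup (voters P)) (cands P) double_ballot dup_voters_ne (cands_ne P)
    double_ballot_dom double_ballot_swo.

Lemma double_profile_is_double : is_double P double_profile.
Proof. by split=> // j; rewrite in_dup. Qed.

Lemma margin_double a b : margin double_profile a b = (margin P a b *+ 2)%R.
Proof.
have supporters_dup c d : [fset j in voters double_profile | ballot double_profile j c d] =
    dup [fset i in voters P | ballot P i c d].
  by apply/fsetP=> j; rewrite in_dup in_fset /= inE /= in_dup !inE.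
by rewrite /margin !supporters_dup !card_dup -!muln2; lia.
Qed.

End Double.

Definition reaches_by P (m : int) z x :=
  exists2 s, path (fun u v => m <= margin P u v)%R z s & last z s = x.

Lemma sc_separating_set P x y : sc P x y ->
  exists c : pred nat, [/\ c x, ~~ c y &
    forall u v, ~~ c u -> c v -> (margin P u v < margin P x y)%R].
Proof.
case=> hxy hsc; exists (fun z => `[< reaches_by P (margin P x y) z x >]); split=> /=.
- by apply/asboolP; exists [::].
- apply/asboolPn => -[s hp hl].
  have sne : s != [::].
    by case: s hp hl => //= _ yx; move: hxy; rewrite yx /margin subrr ltxx.
  have hmaj : majority_path P y s x.
    by split=> //; apply: sub_path hp => u v; apply: lt_le_trans.
  by have := hsc s hmaj; rewrite ltNge path_strength_ge.
- move=> u v /asboolPn hu /asboolP[s hp hl]; rewrite ltNge; apply/negP => huv.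
  by apply: hu; exists (v :: s) => //=; rewrite huv.
Qed.

Section Descent.
Variables (F : profile -> {fset nat}) (x y : nat) (c : pred nat).
Hypotheses (cx : c x) (ncy : ~~ c y).

Definition descent_state P (d : nat) : Prop :=
  [/\ margin P x y = Posz (d + 2),
      forall u v, u \in cands P -> v \in cands P -> u != y -> ~~ c u -> c v ->
        (margin P u v <= Posz d)%R
    & forall v, v \in cands P -> c v ->
        (margin P y v <= Posz (maxn d 1))%R /\ exists j : int, margin P y v = (Posz d + 2 * j)%R].

Definition tier P z : nat :=
  if z == y then 1 else if c z then (if (0 < margin P y z)%R then 0 else 2) else 3.

Lemma descent_state_step P d :
  VSCC F -> tolerant_positive_involvement F -> y \in F P -> descent_state P d.+1 ->
  exists2 P', y \in F P' & descent_state P' d.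
Proof.
move=> hV hT hy [hxy hcut hyrow].
have yc : y \in cands P by apply: (fsubsetP (proj2 (hV P))).
have [xc _] : x \in cands P /\ y \in cands P by apply: margin_gt0_cands; rewrite hxy.
have xy : x != y by apply: contraNneq ncy => <-.
have y_above z : z \in cands P -> z != y -> ~~ (0 < margin P y z)%R -> tier P y < tier P z.
  by move=> _ zy hz; rewrite /tier eqxx (negbTE zy) (negbTE hz); case: (c z).
have [P' [hy' hc' hm']] := tolerant_rank_voter hT hy yc y_above.
exists P' => //; split; rewrite ?hc'.
- have hyx : ~~ (0 < margin P y x)%R by rewrite marginN hxy.
  by rewrite hm' // /tier eqxx (negbTE xy) cx (negbTE hyx) hxy /=; lia.
- move=> u v uc vc uy cu cv; have vy : v != y by apply: contraNneq ncy => <-.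
  have := hcut u v uc vc uy cu cv.
  by rewrite hm' // /tier (negbTE uy) (negbTE cu) (negbTE vy) cv; case: ifP => _ /=; lia.
- move=> v vc cv; have vy : v != y by apply: contraNneq ncy => <-.
  have [hb [j hj]] := hyrow v vc cv.
  rewrite hm' // /tier eqxx (negbTE vy) cv; case: ifP => [hpos|/negbT hpos] /=.
    by split; [lia | exists j; lia].
  by split; [lia | exists (j + 1)%R; lia].
Qed.

Lemma descent P d :
  VSCC F -> tolerant_positive_involvement F -> y \in F P -> descent_state P d ->
  exists2 P', y \in F P' & descent_state P' 0.
Proof.
move=> hV hT; elim: d P => [|d IH] P hy hP; first by exists P.
by have [P' hy' hP'] := descent_state_step hV hT hy hP; apply: IH hy' hP'.
Qed.

Lemma descent_state0_no_path P s : descent_state P 0 -> ~ majority_path P y s x.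
Proof.
move=> [_ hcut hyrow] [hp hl].
have [u [v [cu cv huv]]] := majority_path_crosses ncy (etrans (congr1 c hl) cx) hp.
have [uc vc] := margin_gt0_cands huv.
have [uy|uy] := eqVneq u y.
  by have [hb [j hj]] := hyrow v vc cv; move: huv hb; rewrite uy hj /=; lia.
by have := hcut u v uc vc uy cu cv; rewrite leNgt huv.
Qed.

Lemma double_descent_state P n :
  margin P x y = Posz n.+1 ->
  (forall u v, ~~ c u -> c v -> (margin P u v < margin P x y)%R) ->
  descent_state (double_profile P) n.*2.
Proof.
move=> hxy hcut; split=> [|u v _ _ _ cu cv|v _ cv]; rewrite !margin_double.
- by rewrite hxy; lia.
- by have := hcut u v cu cv; rewrite hxy; lia.
- have := hcut y v ncy cv; rewrite hxy => hyv.
  by split; [lia | exists (margin P y v - Posz n)%R; lia].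
Qed.

End Descent.

Theorem theorem7p9 (F : profile -> {fset nat}) :
  VSCC F -> downward_homogeneity F -> coherent_defeat F ->
  tolerant_positive_involvement F ->
  forall P y, y \in F P -> in_SC P y.
Proof.
move=> hV hDH hCD hT P y hy.
split=> [|x hsc]; first exact: (fsubsetP (proj2 (hV P))).
have [c [cx ncy hcut]] := sc_separating_set hsc.
have [n hn] : exists n, margin P x y = Posz n.+1.
  by case: hsc; case: (margin P x y) => [[|n]|] // _ _; exists n.
have hy2 : y \in F (double_profile P).
  exact: fsubsetP (hDH _ _ (double_profile_is_double P)) y hy.
have [R hyR hR] := descent cx ncy hV hT hy2 (double_descent_state cx ncy hn hcut).
have [hxyR _ _] := hR.
move: hyR; apply/negP; apply: (hCD R x y); first by rewrite hxyR.
by move=> s; exact: (descent_state0_no_path cx ncy hR).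
Qed.
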